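(* There exists a countable family of closed intervals $(B_\omega)_{\omega\in\Sigma_*}$ contained in $[0,1]$, indexed by the set $\Sigma_*=\bigcup_{n\ge0}\{0,1\}^n$ of finite binary words, such that $\lambda(\limsup_\omega B_\omega)>0$, but for every $a>1$, if $E_\omega$ denotes the interval with the same center as $B_\omega$ and length $|B_\omega|^a$, then $\limsup_\omega E_\omega=\emptyset$. (Here the limsup over the countable family is the set of points lying in infinitely many members.)
   Context: $\lambda$ is Lebesgue measure on $\mathbb R$ and $|B|$ denotes the length of an interval $B$. *)

From Stdlib Require Import Reals List.
Open Scope R_scope.

Definition word := list bool.

Definition cinterval (l r : R) (x : R) : Prop := l <= x /\ x <= r.

Definition inf_many (P : word -> Prop) : Prop :=
  forall L : list word, exists w, P w /\ ~ In w L.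

Definition limsup_w (A : word -> R -> Prop) (x : R) : Prop :=
  inf_many (fun w => A w x).

Definition leb_null (S : R -> Prop) : Prop :=
  forall eps : R, 0 < eps ->
    exists a b : nat -> R,
      (forall n, a n <= b n) /\
      (forall x, S x -> exists n, a n < x < b n) /\
      (forall N, sum_f_R0 (fun n => b n - a n) N <= eps).

Definition leb_pos (S : R -> Prop) : Prop := ~ leb_null S.

(* x^a for x >= 0 and a > 0, with the convention 0^a = 0
   (Stdlib's Rpower is only meaningful for positive bases). *)
Definition rpow (x a : R) : R := if Rle_dec x 0 then 0 else Rpower x a.

Definition shrink (a l r : R) : R -> Prop :=
  cinterval ((l + r) / 2 - rpow (r - l) a / 2) ((l + r) / 2 + rpow (r - l) a / 2).

From Stdlib Require Import Reals List Lia Lra Psatz Classical.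
Open Scope R_scope.
Import ListNotations.

(* The interval of the empty word is [0, 1]; the interval of [v], of length [ilen n] at
   depth [n = length v], has its two children [b :: v], of length [ilen (S n)], at its two
   ends, leaving an open middle gap of length [glen n = ilen n / (n + 2)^2].  The total
   length [2^n * ilen n = (n + 2) / (2 (n + 1))] at depth [n] decreases to [1/2], so the
   gaps have total length [1/2].  A point of [0, 1] outside every gap lies in an interval
   of every depth, hence in the limsup; by Heine-Borel, the limsup together with the gaps
   cannot be covered by intervals of total length [< 1], so the limsup is not null.
   Conversely [ilen n ^ a] is eventually smaller than [glen n], so the shrunk interval of
   a deep word lies inside that word's own gap, and distinct gaps are disjoint. *)

Definition mass (n : nat) : R := (INR n + 2) / (2 * (INR n + 1)).
Definition ilen (n : nat) : R := mass n / 2 ^ n.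
Definition glen (n : nat) : R := ilen n - 2 * ilen (S n).

Lemma pow2_pos n : 0 < 2 ^ n.
Proof. apply pow_lt; lra. Qed.

Lemma mass_bounds n : / 2 <= mass n <= 1.
Proof.
  unfold mass; pose proof (pos_INR n).
  split; apply (Rmult_le_reg_r (2 * (INR n + 1))); try lra; field_simplify; lra.
Qed.

Lemma ilen_0 : ilen 0 = 1.
Proof. unfold ilen, mass; simpl; field. Qed.

Lemma ilen_pos n : 0 < ilen n.
Proof.
  pose proof (mass_bounds n); pose proof (pow2_pos n).
  apply Rdiv_lt_0_compat; lra.
Qed.

Lemma ilen_le n : ilen n <= / 2 ^ n.
Proof.
  pose proof (mass_bounds n); pose proof (pow2_pos n).
  unfold ilen, Rdiv; rewrite <- (Rmult_1_l (/ 2 ^ n)) at 2.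
  apply Rmult_le_compat_r; [apply Rlt_le, Rinv_0_lt_compat|]; lra.
Qed.

Lemma glen_eq n : glen n = ilen n / (INR n + 2) ^ 2.
Proof.
  unfold glen, ilen, mass; rewrite S_INR; simpl (2 ^ S n).
  pose proof (pos_INR n); pose proof (pow2_pos n).
  field; lra.
Qed.

Lemma glen_pos n : 0 < glen n.
Proof.
  rewrite glen_eq; pose proof (ilen_pos n); pose proof (pos_INR n).
  apply Rdiv_lt_0_compat; [lra | apply pow_lt; lra].
Qed.

Lemma ilen_S_lt n : 2 * ilen (S n) < ilen n.
Proof. pose proof (glen_pos n); unfold glen in *; lra. Qed.

Lemma pow2_glen n : 2 ^ n * glen n = mass n - mass (S n).
Proof. unfold glen, ilen; simpl (2 ^ S n); pose proof (pow2_pos n); field; lra. Qed.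

(* [exp y > (y/3)^3], and the cube beats [(n+2)^2 <= 9 n^2] once [b^3 n > 243]. *)
Lemma sq_lt_exp b : 0 < b ->
  exists N, forall n, (N <= n)%nat -> (INR n + 2) ^ 2 < exp (b * INR n).
Proof.
  intros Hb.
  assert (Hb3 : 0 < b * b * b) by (repeat apply Rmult_lt_0_compat; lra).
  destruct (INR_unbounded (243 / (b * b * b))) as [N HN].
  exists (S N); intros n Hn.
  assert (Hn1 : 1 <= INR n) by (apply (le_INR 1); lia).
  assert (Hbig : 243 < b * b * b * INR n).
  { apply le_INR in Hn; rewrite S_INR in Hn.
    apply (Rmult_lt_compat_l (b * b * b)) in HN; [|lra].
    replace (b * b * b * (243 / (b * b * b))) with 243 in HN by (field; lra).
    nra. }
  set (y := b * INR n / 3).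
  assert (Hy : 0 < y) by (unfold y; nra).
  assert (Hexp : exp (b * INR n) = exp y * exp y * exp y).
  { rewrite <- !exp_plus; f_equal; unfold y; field. }
  assert (Hy1 : y < exp y) by (pose proof (exp_ineq1 y ltac:(lra)); lra).
  assert (y * y * y < exp y * exp y * exp y).
  { assert (y * y < exp y * exp y) by (apply Rmult_le_0_lt_compat; lra).
    apply Rmult_le_0_lt_compat; nra. }
  assert ((INR n + 2) ^ 2 <= y * y * y); [|lra].
  unfold y.
  replace (b * INR n / 3 * (b * INR n / 3) * (b * INR n / 3))
    with (b * b * b * INR n * (INR n * INR n) / 27) by field.
  assert (243 * (INR n * INR n) <= b * b * b * INR n * (INR n * INR n)) by nra.
  nra.
Qed.

(* [ilen n ^ a <= ilen n * 2^(-(a-1) n)] while [glen n = ilen n / (n+2)^2]. *)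
Lemma rpow_ilen_lt_glen a : 1 < a ->
  exists N, forall n, (N <= n)%nat -> rpow (ilen n) a < glen n.
Proof.
  intros Ha.
  assert (Hb : 0 < (a - 1) * ln 2).
  { apply Rmult_lt_0_compat; [lra|]; rewrite <- ln_1; apply ln_increasing; lra. }
  destruct (sq_lt_exp _ Hb) as [N HN]; exists N; intros n Hn.
  specialize (HN n Hn).
  pose proof (ilen_pos n) as Hl; pose proof (pos_INR n).
  unfold rpow; destruct (Rle_dec (ilen n) 0) as [|_]; [lra|].
  replace a with (1 + (a - 1)) at 1 by ring.
  rewrite Rpower_plus, Rpower_1 by exact Hl.
  assert (Hr : Rpower (ilen n) (a - 1) <= / exp ((a - 1) * ln 2 * INR n)).
  { apply Rle_trans with (Rpower (/ 2 ^ n) (a - 1)).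
    - apply Rle_Rpower_l; [lra|]; split; [exact Hl | apply ilen_le].
    - unfold Rpower; rewrite ln_Rinv, ln_pow, <- exp_Ropp by (try apply pow2_pos; lra).
      right; f_equal; ring. }
  rewrite glen_eq; unfold Rdiv.
  apply Rle_lt_trans with (ilen n * / exp ((a - 1) * ln 2 * INR n)).
  - apply Rmult_le_compat_l; lra.
  - apply Rmult_lt_compat_l; [lra|].
    apply Rinv_lt_contravar; [|lra].
    apply Rmult_lt_0_compat; [apply pow_lt; lra | apply exp_pos].
Qed.

Fixpoint lo (w : word) : R :=
  match w with
  | [] => 0
  | b :: v => lo v + (if b then ilen (length v) - ilen (S (length v)) else 0)
  end.

Definition hi (w : word) : R := lo w + ilen (length w).

Definition gap_lo (w : word) : R := lo w + ilen (S (length w)).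
Definition gap_hi (w : word) : R := hi w - ilen (S (length w)).
Definition in_gap (w : word) (x : R) : Prop := gap_lo w < x < gap_hi w.

Lemma gap_length w : gap_hi w - gap_lo w = glen (length w).
Proof. unfold gap_hi, gap_lo, hi, glen; ring. Qed.

Lemma interval_child b v : lo v <= lo (b :: v) /\ hi (b :: v) <= hi v.
Proof.
  unfold hi; simpl; pose proof (ilen_S_lt (length v)); pose proof (ilen_pos (S (length v))).
  destruct b; lra.
Qed.

Lemma interval_descendant u v : lo v <= lo (u ++ v) /\ hi (u ++ v) <= hi v.
Proof.
  induction u as [|b u [IH1 IH2]]; [simpl; split; lra|].
  rewrite <- app_comm_cons; destruct (interval_child b (u ++ v)); split; lra.
Qed.

Lemma interval_in01 w : 0 <= lo w /\ lo w <= hi w /\ hi w <= 1.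
Proof.
  destruct (interval_descendant w []) as [H0 H1]; rewrite app_nil_r in *.
  unfold hi in *; simpl in *; rewrite ilen_0 in H1; pose proof (ilen_pos (length w)); lra.
Qed.

Lemma interval_disjoint w w' : length w = length w' -> w <> w' ->
  hi w < lo w' \/ hi w' < lo w.
Proof.
  revert w'; induction w as [|b v IH]; intros [|b' v'] Hlen Hne; try discriminate.
  - now contradiction Hne.
  - injection Hlen as Hlen.
    destruct (interval_child b v), (interval_child b' v').
    destruct (list_eq_dec Bool.bool_dec v v') as [<-|Hv].
    + assert (b <> b') by congruence.
      unfold hi in *; simpl; pose proof (ilen_S_lt (length v)).
      destruct b, b'; try congruence; lra.
    + destruct (IH v' Hlen Hv); lra.
Qed.

Lemma gap_avoids_child w b v x : length v = length w -> in_gap w x ->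
  ~ (lo (b :: v) <= x <= hi (b :: v)).
Proof.
  intros Hlen Hg Hx; destruct (interval_child b v).
  destruct (list_eq_dec Bool.bool_dec v w) as [->|Hv].
  - unfold in_gap, gap_lo, gap_hi, hi in *; simpl in *; destruct b; lra.
  - unfold in_gap, gap_lo, gap_hi in Hg; pose proof (ilen_pos (S (length w))).
    destruct (interval_disjoint v w Hlen Hv); lra.
Qed.

Lemma gap_avoids_deeper w v x : (length w < length v)%nat -> in_gap w x ->
  ~ (lo v <= x <= hi v).
Proof.
  intros Hlt Hg Hx.
  rewrite <- (firstn_skipn (length v - S (length w)) v) in Hx.
  destruct (interval_descendant (firstn (length v - S (length w)) v)
    (skipn (length v - S (length w)) v)).
  assert (Hlen : length (skipn (length v - S (length w)) v) = S (length w))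
    by (rewrite length_skipn; lia).
  destruct (skipn (length v - S (length w)) v) as [|b u]; [discriminate|].
  injection Hlen as Hlen.
  apply (gap_avoids_child w b u x Hlen Hg); lra.
Qed.

Lemma in_gap_unique w w' x : in_gap w x -> in_gap w' x -> w = w'.
Proof.
  intros Hg Hg'.
  assert (Hin : forall v, in_gap v x -> lo v <= x <= hi v).
  { intros v Hv; unfold in_gap, gap_lo, gap_hi in Hv; pose proof (ilen_pos (S (length v))); lra. }
  destruct (Nat.lt_total (length w) (length w')) as [Hlt|[Heq|Hlt]].
  - now destruct (gap_avoids_deeper w w' x Hlt Hg (Hin w' Hg')).
  - destruct (list_eq_dec Bool.bool_dec w w') as [|Hne]; [assumption|].
    destruct (Hin w Hg), (Hin w' Hg'); destruct (interval_disjoint w w' Heq Hne); lra.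
  - now destruct (gap_avoids_deeper w' w x Hlt Hg' (Hin w Hg)).
Qed.

Lemma gapless_point_levels x : 0 <= x <= 1 -> (forall w, ~ in_gap w x) ->
  forall n, exists w, length w = n /\ lo w <= x <= hi w.
Proof.
  intros H01 Hng n; induction n as [|n [w [<- Hx]]].
  - exists []; unfold hi; simpl; rewrite ilen_0; split; [reflexivity | lra].
  - specialize (Hng w); unfold in_gap, gap_lo, gap_hi, hi in *; pose proof (ilen_S_lt (length w)).
    destruct (Rle_dec x (lo w + ilen (S (length w)))).
    + exists (false :: w); simpl; split; [reflexivity | lra].
    + exists (true :: w); simpl; split; [reflexivity | lra].
Qed.

Lemma words_length_bound (ws : list word) :
  exists n, forall w, In w ws -> (length w < n)%nat.
Proof.
  induction ws as [|w0 ws [n Hn]]; [exists 0%nat; intros w []|].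
  exists (S (Nat.max n (length w0))); intros w [<-|Hw]; [lia|].
  specialize (Hn w Hw); lia.
Qed.

Lemma limsup_of_all_levels x :
  (forall n, exists w, length w = n /\ lo w <= x <= hi w) ->
  limsup_w (fun w => cinterval (lo w) (hi w)) x.
Proof.
  intros Hlev ws; destruct (words_length_bound ws) as [n Hn].
  destruct (Hlev n) as [w [Hlen Hx]]; exists w; split; [exact Hx|].
  intros Hw; specialize (Hn w Hw); lia.
Qed.

Fixpoint words_of_length (n : nat) : list word :=
  match n with
  | O => [[]]
  | S m => map (cons false) (words_of_length m) ++ map (cons true) (words_of_length m)
  end.

Definition words_shorter (n : nat) : list word := flat_map words_of_length (seq 0 n).

Lemma in_words_shorter w n : (length w < n)%nat -> In w (words_shorter n).
Proof.
  intros Hlt; apply in_flat_map; exists (length w); split; [apply in_seq; lia|].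
  clear Hlt; induction w as [|[] w IH]; simpl; auto using in_or_app, in_map.
Qed.

Lemma shrink_in_gap a w x : rpow (ilen (length w)) a < glen (length w) ->
  shrink a (lo w) (hi w) x -> in_gap w x.
Proof.
  unfold shrink, cinterval, in_gap, gap_lo, gap_hi, hi, glen; intros Hr Hx.
  replace (lo w + ilen (length w) - lo w) with (ilen (length w)) in Hx by ring; lra.
Qed.

Lemma limsup_shrink_empty a : 1 < a ->
  forall x, ~ limsup_w (fun w => shrink a (lo w) (hi w)) x.
Proof.
  intros Ha x Hinf; destruct (rpow_ilen_lt_glen a Ha) as [N HN].
  assert (Hgap : forall ws, exists w, in_gap w x /\ ~ In w ws).
  { intros ws; destruct (Hinf (ws ++ words_shorter N)) as [w [Hw Hnin]].
    exists w; split; [|intro; apply Hnin, in_or_app; left; assumption].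
    apply (shrink_in_gap a); [apply HN | exact Hw].
    destruct (Nat.lt_ge_cases (length w) N) as [Hlt|]; [|assumption].
    exfalso; apply Hnin, in_or_app; right; apply in_words_shorter, Hlt. }
  destruct (Hgap []) as [w [Hw _]]; destruct (Hgap [w]) as [w' [Hw' Hne]].
  apply Hne; left; exact (in_gap_unique w w' x Hw Hw').
Qed.

Section OpenIntervalCovers.

Variables a b : nat -> R.
Hypothesis a_le_b : forall n, a n <= b n.

Definition covers (c d : R) (P : nat -> Prop) : Prop :=
  forall x, c <= x <= d -> exists n, P n /\ a n < x < b n.

Fixpoint total_length (l : list nat) : R :=
  match l with
  | [] => 0
  | n :: l' => b n - a n + total_length l'
  end.

Lemma total_length_app l1 l2 : total_length (l1 ++ l2) = total_length l1 + total_length l2.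
Proof. induction l1 as [|n l1 IH]; simpl; [ring | rewrite IH; ring]. Qed.

Lemma total_length_nonneg l : 0 <= total_length l.
Proof. induction l as [|n l IH]; simpl; [lra | specialize (a_le_b n); lra]. Qed.

Lemma total_length_seq N : total_length (seq 0 (S N)) = sum_f_R0 (fun n => b n - a n) N.
Proof.
  induction N as [|N IH]; [simpl; ring|].
  rewrite seq_S, total_length_app, IH; simpl; ring.
Qed.

(* Remove the interval containing [d]: what is left covers [c, a n]. *)
Lemma finite_cover_length k : forall l c d, (length l <= k)%nat -> c <= d ->
  covers c d (fun n => In n l) -> d - c < total_length l.
Proof.
  induction k as [|k IH]; intros l c d Hk Hcd Hcov;
    destruct (Hcov d (conj Hcd (Rle_refl d))) as [n [Hn [Han Hbn]]].
  - destruct l; [destruct Hn | simpl in Hk; lia].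
  - destruct (in_split _ _ Hn) as [l1 [l2 ->]].
    rewrite total_length_app; simpl.
    replace (total_length l1 + (b n - a n + total_length l2))
      with (b n - a n + total_length (l1 ++ l2)) by (rewrite total_length_app; ring).
    destruct (Rlt_le_dec (a n) c) as [Hac|Hca].
    + pose proof (total_length_nonneg (l1 ++ l2)); lra.
    + enough (a n - c < total_length (l1 ++ l2)) by lra.
      apply IH; [rewrite length_app in *; simpl in Hk; lia | exact Hca|].
      intros x Hx; destruct (Hcov x ltac:(lra)) as [m [Hm Hxm]].
      exists m; split; [|exact Hxm].
      apply in_app_or in Hm; apply in_or_app; destruct Hm as [|[<-|]]; auto; lra.
Qed.

Lemma open_cover_finite c d : c <= d -> covers c d (fun _ => True) ->
  exists N, covers c d (fun n => (n <= N)%nat).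
Proof.
  intros Hcd Hcov.
  set (S t := c <= t <= d /\ exists N, covers c t (fun n => (n <= N)%nat)).
  assert (Sc : S c).
  { split; [lra|]; destruct (Hcov c ltac:(lra)) as [n0 [_ Hn0]].
    exists n0; intros x Hx; exists n0; split; [lia|]; replace x with c by lra; exact Hn0. }
  destruct (completeness S) as [s [Hub Hlub]];
    [exists d; intros t [Ht _]; lra | exists c; exact Sc|].
  assert (Hcs : c <= s) by (apply Hub, Sc).
  assert (Hsd : s <= d) by (apply Hlub; intros t [Ht _]; lra).
  destruct (Hcov s ltac:(lra)) as [n0 [_ [Ha0 Hb0]]].
  (* Some [t] in [S] lies beyond [a n0], else [max (a n0) c] would be a smaller bound. *)
  assert (Ht : exists t, S t /\ a n0 < t).
  { apply NNPP; intro Hne.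
    assert (s <= Rmax (a n0) c).
    { apply Hlub; intros t Ht; destruct (Rle_dec t (a n0)).
      - apply Rle_trans with (a n0); [assumption | apply Rmax_l].
      - exfalso; apply Hne; exists t; split; [exact Ht | lra]. }
    unfold Rmax in *; destruct (Rle_dec (a n0) c);
      [apply Hne; exists c; split; [exact Sc | lra] | lra]. }
  destruct Ht as [t [[Ht [N HN]] Hat]].
  set (t' := Rmin d ((s + b n0) / 2)).
  assert (Hcov' : covers c t' (fun n => (n <= Nat.max N n0)%nat)).
  { intros x Hx; destruct (Rle_dec x t).
    - destruct (HN x ltac:(lra)) as [n [Hn Hxn]]; exists n; split; [lia | exact Hxn].
    - exists n0; split; [lia|].
      assert (t' <= (s + b n0) / 2) by apply Rmin_r; lra. }
  assert (Ht' : t' <= s).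
  { apply Hub; split; [|exists (Nat.max N n0); exact Hcov'].
    unfold t'; split; [apply Rmin_glb; lra | apply Rmin_l]. }
  assert (Hd : t' = d)
    by (unfold t', Rmin in *; destruct (Rle_dec d ((s + b n0) / 2)); lra).
  exists (Nat.max N n0); rewrite <- Hd; exact Hcov'.
Qed.

Lemma open_cover_length c d : c <= d -> covers c d (fun _ => True) ->
  exists N, d - c < sum_f_R0 (fun n => b n - a n) N.
Proof.
  intros Hcd Hcov; destruct (open_cover_finite c d Hcd Hcov) as [N HN].
  exists N; rewrite <- total_length_seq.
  apply (finite_cover_length _ _ c d (le_n _) Hcd).
  intros x Hx; destruct (HN x Hx) as [n [Hn Hxn]].
  exists n; split; [apply in_seq; lia | exact Hxn].
Qed.

End OpenIntervalCovers.

Definition interleave (f g : nat -> R) (i : nat) : R :=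
  if Nat.even i then f (Nat.div2 i) else g (Nat.div2 i).

Lemma interleave_sum f g N :
  sum_f_R0 (interleave f g) (2 * N + 1) = sum_f_R0 f N + sum_f_R0 g N.
Proof.
  unfold interleave.
  induction N as [|N IH]; [simpl; ring|].
  replace (2 * S N + 1)%nat with (S (S (2 * N + 1))) by lia.
  rewrite 2!tech5, IH.
  replace (S (2 * N + 1)) with (2 * S N)%nat by lia.
  replace (S (2 * S N)) with (2 * S N + 1)%nat by lia.
  rewrite Nat.even_even, Nat.div2_double, Nat.even_odd, Nat.div2_odd'; simpl; ring.
Qed.

Lemma partial_sum_le f m n : (forall i, 0 <= f i) -> (m <= n)%nat ->
  sum_f_R0 f m <= sum_f_R0 f n.
Proof.
  intros Hf Hmn; destruct (Nat.eq_dec m n) as [->|]; [lra|].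
  rewrite (tech2 f m n) by lia.
  pose proof (cond_pos_sum (fun i => f (S m + i)%nat) (n - S m) (fun i => Hf _)); lra.
Qed.

Lemma open_cover_length2 (a b a' b' : nat -> R) c d :
  (forall n, a n <= b n) -> (forall n, a' n <= b' n) -> c <= d ->
  (forall x, c <= x <= d -> (exists n, a n < x < b n) \/ (exists n, a' n < x < b' n)) ->
  exists N, d - c < sum_f_R0 (fun n => b n - a n) N + sum_f_R0 (fun n => b' n - a' n) N.
Proof.
  intros Hab Hab' Hcd Hcov.
  set (diff := interleave (fun n => b n - a n) (fun n => b' n - a' n)).
  assert (Hdiff : forall i, interleave b b' i - interleave a a' i = diff i)
    by (intro i; unfold diff, interleave; destruct (Nat.even i); ring).
  assert (Hle : forall i, interleave a a' i <= interleave b b' i)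
    by (intro i; unfold interleave; destruct (Nat.even i); auto).
  destruct (open_cover_length _ _ Hle c d Hcd) as [N HN].
  - intros x Hx; destruct (Hcov x Hx) as [[n Hn]|[n Hn]].
    + exists (2 * n)%nat; unfold interleave; rewrite Nat.even_even, Nat.div2_double; auto.
    + exists (2 * n + 1)%nat; unfold interleave; rewrite Nat.even_odd, Nat.div2_odd'; auto.
  - exists N; rewrite <- interleave_sum; fold diff.
    rewrite (sum_eq _ diff) in HN by (intros; apply Hdiff).
    enough (sum_f_R0 diff N <= sum_f_R0 diff (2 * N + 1)) by lra.
    apply partial_sum_le; [|lia].
    intro i; rewrite <- Hdiff; specialize (Hle i); lra.
Qed.

Fixpoint val (w : word) : nat :=
  match w with
  | [] => 0
  | b :: v => Nat.b2n b + 2 * val v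
  end.

Fixpoint bits (n k : nat) : word :=
  match n with
  | O => []
  | S m => Nat.odd k :: bits m (Nat.div2 k)
  end.

Lemma bits_length n k : length (bits n k) = n.
Proof. revert k; induction n as [|n IH]; intros k; simpl; auto. Qed.

Lemma bits_val w : bits (length w) (val w) = w.
Proof.
  induction w as [|b w IH]; cbn [length val bits]; [reflexivity|].
  rewrite Nat.add_comm; destruct b; cbn [Nat.b2n].
  - now rewrite Nat.odd_odd, Nat.div2_odd', IH.
  - now rewrite Nat.add_0_r, Nat.odd_even, Nat.div2_double, IH.
Qed.

Lemma val_lt w : (val w < 2 ^ length w)%nat.
Proof. induction w as [|[] w IH]; simpl; lia. Qed.

Definition level (m : nat) : nat := Nat.log2 (S m).

(* Words of length [n] get the numbers [2^n - 1 + val w], i.e. [2^n - 1 .. 2^(n+1) - 2]. *)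
Definition word_at (m : nat) : word := bits (level m) (S m - 2 ^ level m).

Lemma level_block n k : (k < 2 ^ n)%nat -> level (2 ^ n - 1 + k) = n.
Proof.
  intros Hk; pose proof (Nat.pow_nonzero 2 n ltac:(lia)).
  apply Nat.log2_unique; simpl; lia.
Qed.

Lemma length_word_at m : length (word_at m) = level m.
Proof. apply bits_length. Qed.

Lemma word_at_val w : word_at (2 ^ length w - 1 + val w) = w.
Proof.
  pose proof (val_lt w); pose proof (Nat.pow_nonzero 2 (length w) ltac:(lia)).
  unfold word_at; rewrite level_block by assumption.
  replace (S (2 ^ length w - 1 + val w) - 2 ^ length w)%nat with (val w) by lia.
  apply bits_val.
Qed.

Lemma glen_level_block n :
  sum_f_R0 (fun m => glen (level m)) (2 ^ S n - 2) = 1 - mass (S n).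
Proof.
  induction n as [|n IH].
  - change (glen 0 = 1 - mass 1).
    rewrite <- (Rmult_1_l (glen 0)); change 1 with (2 ^ 0) at 1; rewrite pow2_glen.
    unfold mass; simpl; field.
  - pose proof (Nat.pow_nonzero 2 n ltac:(lia)).
    rewrite (tech2 _ (2 ^ S n - 2)) by (simpl; lia); rewrite IH.
    replace (2 ^ S (S n) - 2 - S (2 ^ S n - 2))%nat with (2 ^ S n - 1)%nat by (simpl; lia).
    rewrite (sum_eq _ (fun _ => glen (S n))).
    + rewrite sum_cte, Nat.sub_1_r, Nat.succ_pred_pos, pow_INR by (simpl; lia).
      rewrite Rmult_comm, pow2_glen; simpl (INR 2); ring.
    + intros i Hi; f_equal.
      replace (S (2 ^ S n - 2) + i)%nat with (2 ^ S n - 1 + i)%nat by (simpl; lia).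
      apply level_block; simpl in *; lia.
Qed.

Lemma glen_level_sum M : sum_f_R0 (fun m => glen (level m)) M <= / 2.
Proof.
  pose proof (Nat.pow_gt_lin_r 2 (S M) ltac:(lia)).
  apply Rle_trans with (sum_f_R0 (fun m => glen (level m)) (2 ^ S M - 2)).
  - apply partial_sum_le; [intro; apply Rlt_le, glen_pos | lia].
  - rewrite glen_level_block; pose proof (mass_bounds (S M)); lra.
Qed.

Lemma limsup_intervals_pos : leb_pos (limsup_w (fun w => cinterval (lo w) (hi w))).
Proof.
  intros Hnull; destruct (Hnull (/ 4) ltac:(lra)) as (a & b & Hab & Hcov & Hsum).
  destruct (open_cover_length2 a b (fun m => gap_lo (word_at m)) (fun m => gap_hi (word_at m)) 0 1)
    as [N HN].
  - exact Hab.
  - intro m; pose proof (gap_length (word_at m)); pose proof (glen_pos (length (word_at m))); lra.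
  - lra.
  - intros x Hx; destruct (classic (exists w, in_gap w x)) as [[w Hw]|Hng].
    + right; exists (2 ^ length w - 1 + val w)%nat; rewrite word_at_val; exact Hw.
    + left; apply Hcov, limsup_of_all_levels, gapless_point_levels; [exact Hx|].
      intros w Hw; apply Hng; exists w; exact Hw.
  - rewrite (sum_eq (fun m => gap_hi (word_at m) - gap_lo (word_at m)) (fun m => glen (level m)))
      in HN by (intros m _; rewrite gap_length, length_word_at; reflexivity).
    pose proof (Hsum N); pose proof (glen_level_sum N); lra.
Qed.

Theorem mainTheorem6 :
  exists lo hi : word -> R,
    (forall w, 0 <= lo w /\ lo w <= hi w /\ hi w <= 1) /\
    leb_pos (limsup_w (fun w => cinterval (lo w) (hi w))) /\
    (forall a : R, 1 < a ->
       forall x : R, ~ limsup_w (fun w => shrink a (lo w) (hi w)) x).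
Proof.
  exists lo, hi; split; [|split].
  - exact interval_in01.
  - exact limsup_intervals_pos.
  - exact limsup_shrink_empty.
Qed.
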